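(* Under the standing setup in the context, there are constants $K\ge1$, $C\ge0$ (depending only on $b,c,L,f$) such that \[\rho_\phi([x],[y])\le K\rho(x,y)+C\] for all $x,y\in S$ with $\rho(x,y)< f$.
   Context: A semi-metric on a set $Z$ is a function $d:Z\times Z\to[0,\infty)$ with $d(x,y)=0$ iff $x=y$ and $d(x,y)=d(y,x)$. For $b\ge1$, $c\ge0$, a $(b,c)$-metric is a semi-metric with $d(x,z)\le b(d(x,y)+d(y,z))+c$ for all $x,y,z$. Standing setup. $X$ is a topological space (in the paper an $n$-manifold) carrying a $(b,c)$-metric $\rho$. A collapsing set consists of: a subset $S\subseteq X$; a family $\mathcal F$ of pairwise disjoint nonempty subsets of $S$ (''fibers'') whose union is $S$; and a subset $T\subseteq S$ meeting each fiber in exactly one point. The fibering is bounded: $f:=\sup_{F\in\mathcal F}\sup_{u,v\in F}\rho(u,v)<\infty$ (''length of the longest fiber''). For $a,a'\in T$, the length of a continuous path $\gamma:[0,1]\to T$ is $\ell(\gamma)=\sup\sum_{i=1}^k\rho(\gamma(t_{i-1}),\gamma(t_i))$ over partitions $0=t_0<\dots<t_k=1$, and $\rho_p(a,a')$ is the infimum of $\ell(\gamma)$ over continuous paths in $T$ from $a$ to $a'$. $T$ is a Lipschitz curve: there is $L\ge1$ with $\rho_p(a,a')\le L\,\rho(a,a')$ for all $a,a'\in T$. The collapsing relation is $x\sim y$ iff $x=y$ or $x,y$ lie in a common fiber; $X^*=X/\!\sim$, $\phi(x)=[x]$. For $x\in X$ let $r_x=\inf_{s\in S}\rho(x,s)$;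 assume this infimum is attained and fix $x_S\in S$ with $\rho(x,x_S)=r_x$, taking $x_S=x$ when $x\in S$. Let $x'$ denote the unique point of $T$ in the fiber containing $x_S$. The collapsed metric is $\rho_\phi([x],[y])=\rho(x,y)$ if $x,y\notin S$ and $\rho(x,y)\le r_x+r_y$, and $\rho_\phi([x],[y])=\rho_p(x',y')+r_x+r_y$ otherwise. *)

From HB Require Import structures.
From mathcomp Require Import all_boot all_order all_algebra.
From mathcomp Require Import all_classical all_reals all_analysis.
Set Implicit Arguments. Unset Strict Implicit. Unset Printing Implicit Defensive.
Import Order.TTheory GRing.Theory Num.Theory.
Local Open Scope classical_set_scope.
Local Open Scope ring_scope.

Section Defs.
Variables (R : realType) (X : topologicalType).

Definition is_semimetric (rho : X -> X -> R) : Prop :=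
  (forall x y, 0 <= rho x y) /\
  (forall x y, rho x y = 0 <-> x = y) /\
  (forall x y, rho x y = rho y x).

Definition is_bc_metric (b c : R) (rho : X -> X -> R) : Prop :=
  is_semimetric rho /\
  forall x y z, rho x z <= b * (rho x y + rho y z) + c.

Definition same_fiber (Fam : set (set X)) (u v : X) : Prop :=
  exists F, Fam F /\ F u /\ F v.

Definition collapsing_set (S : set X) (Fam : set (set X)) (T : set X) : Prop :=
  (forall F, Fam F -> F !=set0) /\
  (forall F G, Fam F -> Fam G -> F `&` G !=set0 -> F = G) /\
  (forall x, S x <-> exists F, Fam F /\ F x) /\
  T `<=` S /\
  (forall F, Fam F -> exists t, F t /\ T t /\ forall t', F t' -> T t' -> t' = t).

Definition fiber_length (rho : X -> X -> R) (Fam : set (set X)) : \bar R :=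
  ereal_sup [set l | exists F u v, Fam F /\ F u /\ F v /\ l = (rho u v)%:E].

Definition path_length (rho : X -> X -> R) (g : R -> X) : \bar R :=
  ereal_sup [set l | exists (k : nat) (t : nat -> R),
     t 0%N = 0 /\ t k = 1 /\ (forall i, (i < k)%N -> t i < t i.+1) /\
     l = (\sum_(i < k) rho (g (t i)) (g (t i.+1)))%:E].

Definition rho_p (rho : X -> X -> R) (T : set X) (a a' : X) : \bar R :=
  ereal_inf [set l | exists g : R -> X,
     {within `[0, 1], continuous g} /\
     (forall s, 0 <= s <= 1 -> T (g s)) /\
     g 0 = a /\ g 1 = a' /\ l = path_length rho g].

Definition r_dist (rho : X -> X -> R) (S : set X) (x : X) : \bar R :=
  ereal_inf [set (rho x s)%:E | s in S].

(* collapsed metric, computed on representatives x, y of [x], [y];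
   xS x is the chosen nearest point of S, tp s the point of T in the fiber of s *)
Definition rho_phi (rho : X -> X -> R) (S T : set X) (xS tp : X -> X)
    (x y : X) : \bar R :=
  if `[< ~ S x /\ ~ S y /\ ((rho x y)%:E <= r_dist rho S x + r_dist rho S y)%E >]
  then (rho x y)%:E
  else (rho_p rho T (tp (xS x)) (tp (xS y)) + r_dist rho S x + r_dist rho S y)%E.

End Defs.

From HB Require Import structures.
From mathcomp Require Import all_boot all_order all_algebra.
From mathcomp Require Import all_classical all_reals all_analysis.
From mathcomp Require Import lra.
Import Order.TTheory GRing.Theory Num.Theory.
Local Open Scope classical_set_scope.
Local Open Scope ring_scope.

(* For x, y in S we have r_x = r_y = 0 and x_S = x, y_S = y, so
   the collapsed distance reduces to rho_p(x', y'), where x', y' are the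
   points of T in the fibers of x and y.  The Lipschitz property of T bounds
   this by L * rho(x', y').  Two applications of the (b,c)-triangle
   inequality along x' -> x -> y -> y' give
     rho(x', y') <= b^2 rho(x, y) + b rho(x', x) + b^2 rho(y, y') + b c + c,
   and each fiber segment rho(s, s') is at most the fiber length f (at most
   max f 0 to keep the constant nonnegative).  Hence one may take
   K = L b^2 and C = L (b m + b^2 m + b c + c) with m = max f 0.
   The file proves the two-step triangle estimate, the reduction of rho_phi
   on S, and the fiber bound, and then combines them. *)

Lemma bc_triangle2 {R : realFieldType} {Y : Type} {b c : R}
    {rho : Y -> Y -> R} (x' x y y' : Y) :
  0 <= b -> (forall u v w, rho u w <= b * (rho u v + rho v w) + c) ->
  rho x' y' <= b ^+ 2 * rho x y + b * rho x' x + b ^+ 2 * rho y y' + b * c + c.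
Proof.
move=> b0 tri.
have first_leg := tri x' x y'.
have second_leg : b * rho x y' <= b * (b * (rho x y + rho y y') + c).
  exact/ler_wpM2l/tri.
rewrite expr2; lra.
Qed.

Lemma r_dist_on_S (R : realType) (X : topologicalType) (rho : X -> X -> R)
    (S : set X) (xS : X -> X) (z : X) :
  rho z z = 0 -> (rho z (xS z))%:E = r_dist rho S z -> xS z = z ->
  r_dist rho S z = 0%:E.
Proof. by move=> rzz near fix_z; rewrite -near fix_z rzz. Qed.

(* When x lies in S the collapsed metric is the path metric between the
   T-points of the fibers: its first case requires points outside S. *)
Lemma rho_phi_on_S (R : realType) (X : topologicalType) (rho : X -> X -> R)
    (S T : set X) (xS tp : X -> X) (x y : X) :
  S x -> xS x = x -> xS y = y ->
  r_dist rho S x = 0%:E -> r_dist rho S y = 0%:E ->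
  rho_phi rho S T xS tp x y = rho_p rho T (tp x) (tp y).
Proof.
move=> Sx fix_x fix_y rx ry.
by rewrite /rho_phi asboolF; [rewrite fix_x fix_y rx ry !adde0 | case].
Qed.

Lemma same_fiber_le_length (R : realType) (X : topologicalType)
    (rho : X -> X -> R) (Fam : set (set X)) (f : R) (u v : X) :
  fiber_length rho Fam = f%:E -> same_fiber Fam u v -> rho u v <= f.
Proof.
move=> hf [F [FF [Fu Fv]]]; rewrite -lee_fin -hf.
by apply: ereal_sup_ubound; exists F, u, v.
Qed.

Theorem lemma2p4 (R : realType) (b c L f : R) :
  1 <= b -> 0 <= c -> 1 <= L ->
  exists K C : R, 1 <= K /\ 0 <= C /\
  forall (X : topologicalType) (rho : X -> X -> R)
         (S : set X) (Fam : set (set X)) (T : set X) (xS tp : X -> X),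
    is_bc_metric b c rho ->
    collapsing_set S Fam T ->
    fiber_length rho Fam = f%:E ->
    (forall a a', T a -> T a' -> (rho_p rho T a a' <= (L * rho a a')%:E)%E) ->
    (forall x, S (xS x) /\ (rho x (xS x))%:E = r_dist rho S x) ->
    (forall x, S x -> xS x = x) ->
    (forall s, S s -> T (tp s) /\ same_fiber Fam s (tp s)) ->
    forall x y, S x -> S y -> rho x y < f ->
      (rho_phi rho S T xS tp x y <= (K * rho x y + C)%:E)%E.
Proof.
move=> b1 c0 L1; set m := Num.max f 0.
have m0 : 0 <= m by rewrite le_max lexx orbT.
have fm : f <= m by rewrite le_max lexx.
have b0 : 0 <= b by apply: le_trans b1.
have L0 : 0 <= L by apply: le_trans L1.
exists (L * b ^+ 2), (L * (b * m + b ^+ 2 * m + b * c + c)); split.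
  by rewrite -[1]mulr1 ler_pM // exprn_ege1.
split; first by rewrite mulr_ge0 // !addr_ge0 // mulr_ge0 // exprn_ge0.
move=> X rho S Fam T xS tp [[_ [rho_eq0 rhoC]] tri] _ hf lipT near fixS htp
  x y Sx Sy _.
have r0 z : S z -> r_dist rho S z = 0%:E.
  by move=> Sz; apply: r_dist_on_S (proj2 (near z)) (fixS z Sz); exact/rho_eq0.
rewrite rho_phi_on_S ?fixS ?r0 //.
have [Tx fib_x] := htp x Sx; have [Ty fib_y] := htp y Sy.
apply: le_trans (lipT _ _ Tx Ty) _; rewrite lee_fin -mulrA -mulrDr.
apply: ler_wpM2l => //.
have seg_x : rho (tp x) x <= m.
  by rewrite rhoC; apply: le_trans fm; apply: same_fiber_le_length hf fib_x.
have seg_y : rho y (tp y) <= m.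
  by apply: le_trans fm; apply: same_fiber_le_length hf fib_y.
apply: le_trans (bc_triangle2 (tp x) x y (tp y) b0 tri) _.
have bseg_x : b * rho (tp x) x <= b * m by exact: ler_wpM2l.
have bseg_y : b ^+ 2 * rho y (tp y) <= b ^+ 2 * m.
  by apply: ler_wpM2l; rewrite ?exprn_ge0.
rewrite -!addrA lerD2l !addrA lerD2r lerD2r.
exact: lerD.
Qed.
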